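(* Fix $r\in\mathbb R$ and let $\rho>0$. For $\theta\in[0,\pi]$, the function $\theta\mapsto\Re\,g_0(\rho e^{i\theta},0,r)$ is decreasing where $$\cos\theta<\frac{1+\rho^2}{2\sqrt2\,\rho}$$ holds and increasing where it does not hold; for $\theta\in[\pi,2\pi]$ the opposite is true. Let $R>0$. For $\phi\in[0,\pi]$, the function $\phi\mapsto-\Re\,g_0(1-Re^{-i\phi},0,r)$ is decreasing where $Q>0$ and increasing where $Q<0$, where $$Q=6\sqrt2-4+(3\sqrt2+2)R^2+16r+4R^2r-8\sqrt2R(1+\sqrt2r)\cos\phi;$$ for $\phi\in[\pi,2\pi]$ the opposite is true. (Monotonicity is meant on intervals avoiding the points $0,\pm1$ where $g_0$ is singular.)
   Context: For $z\in\mathbb C\setminus\{0,1,-1\}$ and $s,r\in\mathbb R$, $$g_0(z,s,r)=\Big(\tfrac1{2\sqrt2}-\tfrac12-s+r\Big)\log z+\Big(\tfrac12-\tfrac1{2\sqrt2}-s\Big)\log(1-z)+\Big(\tfrac12+\tfrac1{2\sqrt2}+s\Big)\log(1+z)+(r-2s)\log(\sqrt2+1)-\tfrac{\log2}{2};$$ its real part does not depend on the choice of branches of the logarithms. *)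

From Stdlib Require Import Reals Lra.
From Coquelicot Require Import Coquelicot.
Open Scope R_scope.

(* Real part of g_0(z,s,r).  Since Re (log w) = ln |w| for every branch of
   the logarithm, the real part of g_0 is literally the following. *)
Definition re_g0 (z : C) (s r : R) : R :=
  (1 / (2 * sqrt 2) - 1 / 2 - s + r) * ln (Cmod z)
  + (1 / 2 - 1 / (2 * sqrt 2) - s) * ln (Cmod (Cminus (RtoC 1) z))
  + (1 / 2 + 1 / (2 * sqrt 2) + s) * ln (Cmod (Cplus (RtoC 1) z))
  + (r - 2 * s) * ln (sqrt 2 + 1) - ln 2 / 2.

Definition cis (t : R) : C := (cos t, sin t).

Definition nonsingular (z : C) : Prop :=
  z <> RtoC 0 /\ z <> RtoC 1 /\ z <> RtoC (-1).

Definition decreasing_on (f : R -> R) (a b : R) : Prop :=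
  forall x y, a <= x -> x < y -> y <= b -> f y < f x.
Definition increasing_on (f : R -> R) (a b : R) : Prop :=
  forall x y, a <= x -> x < y -> y <= b -> f x < f y.

Definition Qfun (R0 r phi : R) : R :=
  6 * sqrt 2 - 4 + (3 * sqrt 2 + 2) * R0 ^ 2 + 16 * r + 4 * R0 ^ 2 * r
  - 8 * sqrt 2 * R0 * (1 + sqrt 2 * r) * cos phi.

From Stdlib Require Import Reals Lra.
From Coquelicot Require Import Coquelicot.
Open Scope R_scope.

(* On the circle |z| = rho, and on the circle |z - 1| = R, each of |z|, |1 - z|,
   |1 + z| is either constant or the square root of an affine function of the
   cosine c of the angle.  Hence Re g_0 = K + al ln (p1 + q1 c) + be ln (p2 + q2 c),
   whose derivative in c has the sign of the affine numerator
   al q1 (p2 + q2 c) + be q2 (p1 + q1 c); on the two circles this numerator is a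
   positive multiple of 1 + rho^2 - 2 sqrt 2 rho c, resp. of Q.  As cos decreases
   on [0, pi] and increases on [pi, 2 pi], monotonicity in c transfers to the
   angle with the orientation reversed, resp. preserved. *)

Lemma sqrt2_pos : 0 < sqrt 2.
Proof. apply sqrt_lt_R0; lra. Qed.

Lemma sqrt2_sq : sqrt 2 ^ 2 = 2.
Proof. apply pow2_sqrt; lra. Qed.

Lemma half_inv_sqrt2 : 1 / (2 * sqrt 2) = sqrt 2 / 4.
Proof. pose proof sqrt2_pos. pose proof sqrt2_sq. field_simplify_eq; lra. Qed.

Lemma affine_pos_between (p q c1 c2 c : R) :
  c1 <= c <= c2 -> 0 < p + q * c1 -> 0 < p + q * c2 -> 0 < p + q * c.
Proof. intros hc h1 h2. destruct (Rle_lt_dec 0 q); nra. Qed.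

Lemma affine_neg_between (p q c1 c2 c : R) :
  c1 <= c <= c2 -> p + q * c1 < 0 -> p + q * c2 < 0 -> p + q * c < 0.
Proof.
  intros hc h1 h2.
  assert (0 < - p + - q * c) by (apply (affine_pos_between _ _ c1 c2); lra).
  lra.
Qed.

Lemma lt_of_deriv_pos (f f' : R -> R) (a b : R) :
  a < b -> (forall c, a <= c <= b -> derivable_pt_lim f c (f' c)) ->
  (forall c, a < c < b -> 0 < f' c) -> f a < f b.
Proof.
  intros hab hf hpos.
  destruct (MVT_cor2 f f' a b hab hf) as [c [E hc]].
  pose proof (hpos c hc). nra.
Qed.

Section LnAffine2.
Variables (al p1 q1 be p2 q2 : R).

Definition ln_affine2 (c : R) : R := al * ln (p1 + q1 * c) + be * ln (p2 + q2 * c).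

Definition ln_affine2_num (c : R) : R :=
  al * q1 * (p2 + q2 * c) + be * q2 * (p1 + q1 * c).

Lemma ln_affine2_derive (c : R) : 0 < p1 + q1 * c -> 0 < p2 + q2 * c ->
  derivable_pt_lim ln_affine2 c
    (ln_affine2_num c / ((p1 + q1 * c) * (p2 + q2 * c))).
Proof.
  intros h1 h2. apply is_derive_Reals. unfold ln_affine2, ln_affine2_num.
  auto_derive; [repeat split; lra | field; lra].
Qed.

Lemma ln_affine2_lt (c1 c2 : R) : c1 < c2 ->
  0 < p1 + q1 * c1 -> 0 < p1 + q1 * c2 -> 0 < p2 + q2 * c1 -> 0 < p2 + q2 * c2 ->
  (forall c, c1 < c < c2 -> 0 < ln_affine2_num c) -> ln_affine2 c1 < ln_affine2 c2.
Proof.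
  intros hc h11 h12 h21 h22 hnum.
  assert (dom : forall c, c1 <= c <= c2 -> 0 < p1 + q1 * c /\ 0 < p2 + q2 * c).
  { intros c hc'. split; eapply affine_pos_between; eauto. }
  apply (lt_of_deriv_pos _
    (fun c => ln_affine2_num c / ((p1 + q1 * c) * (p2 + q2 * c))) _ _ hc).
  - intros c hc'. destruct (dom c hc'). apply ln_affine2_derive; assumption.
  - intros c hc'. destruct (dom c ltac:(lra)).
    apply Rdiv_lt_0_compat; [apply hnum; assumption | apply Rmult_lt_0_compat; assumption].
Qed.

End LnAffine2.

Lemma ln_affine2_gt (al p1 q1 be p2 q2 c1 c2 : R) : c1 < c2 ->
  0 < p1 + q1 * c1 -> 0 < p1 + q1 * c2 -> 0 < p2 + q2 * c1 -> 0 < p2 + q2 * c2 ->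
  (forall c, c1 < c < c2 -> ln_affine2_num al p1 q1 be p2 q2 c < 0) ->
  ln_affine2 al p1 q1 be p2 q2 c2 < ln_affine2 al p1 q1 be p2 q2 c1.
Proof.
  intros hc h11 h12 h21 h22 hnum.
  assert (hneg : ln_affine2 (- al) p1 q1 (- be) p2 q2 c1 < ln_affine2 (- al) p1 q1 (- be) p2 q2 c2).
  { apply ln_affine2_lt; try assumption.
    intros c hc'. specialize (hnum c hc'). unfold ln_affine2_num in *. lra. }
  unfold ln_affine2 in *. lra.
Qed.

Definition cos_monotonicity (f : R -> R) (P Q : R -> Prop) (a b : R) : Prop :=
  ((0 <= a /\ b <= PI) ->
     ((forall t, a <= t <= b -> P t) -> decreasing_on f a b) /\
     ((forall t, a <= t <= b -> Q t) -> increasing_on f a b)) /\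
  ((PI <= a /\ b <= 2 * PI) ->
     ((forall t, a <= t <= b -> P t) -> increasing_on f a b) /\
     ((forall t, a <= t <= b -> Q t) -> decreasing_on f a b)).

Lemma cos_monotonicity_intro (f : R -> R) (P Q : R -> Prop) (a b : R) :
  (forall x y, a <= x <= b -> a <= y <= b -> cos x < cos y ->
     (forall t, a <= t <= b -> P t) -> f x < f y) ->
  (forall x y, a <= x <= b -> a <= y <= b -> cos x < cos y ->
     (forall t, a <= t <= b -> Q t) -> f y < f x) ->
  cos_monotonicity f P Q a b.
Proof.
  intros hP hQ.
  split; intros [ha hb]; split; intros hPQ x y hx hxy hy.
  - apply hP; [lra | lra | apply cos_decreasing_1; lra | exact hPQ].
  - apply hQ; [lra | lra | apply cos_decreasing_1; lra | exact hPQ].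
  - apply hP; [lra | lra | apply cos_increasing_1; lra | exact hPQ].
  - apply hQ; [lra | lra | apply cos_increasing_1; lra | exact hPQ].
Qed.

Section CosLnAffine2.
Variables (al p1 q1 be p2 q2 K : R) (f : R -> R) (P Q : R -> Prop) (a b : R).
Hypothesis f_eq : forall t, a <= t <= b -> f t = K + ln_affine2 al p1 q1 be p2 q2 (cos t).
Hypothesis dom1 : forall t, a <= t <= b -> 0 < p1 + q1 * cos t.
Hypothesis dom2 : forall t, a <= t <= b -> 0 < p2 + q2 * cos t.
(* The sign of the numerator is only required strictly inside the image interval:
   the condition [~ cond] of the theorem lets it vanish at an endpoint. *)
Hypothesis P_num : forall x y, a <= x <= b -> a <= y <= b ->
  (forall t, a <= t <= b -> P t) ->
  forall c, cos x < c < cos y -> 0 < ln_affine2_num al p1 q1 be p2 q2 c.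
Hypothesis Q_num : forall x y, a <= x <= b -> a <= y <= b ->
  (forall t, a <= t <= b -> Q t) ->
  forall c, cos x < c < cos y -> ln_affine2_num al p1 q1 be p2 q2 c < 0.

Lemma cos_monotonicity_ln_affine2 : cos_monotonicity f P Q a b.
Proof.
  apply cos_monotonicity_intro; intros x y hx hy hcos hPQ;
    rewrite (f_eq x hx), (f_eq y hy); apply Rplus_lt_compat_l.
  - apply ln_affine2_lt; auto. exact (P_num x y hx hy hPQ).
  - apply ln_affine2_gt; auto. exact (Q_num x y hx hy hPQ).
Qed.

End CosLnAffine2.

Lemma Cmod_sq_cis (z : C) (c rho t : R) :
  fst z = c + rho * cos t -> snd z = rho * sin t ->
  Cmod z ^ 2 = c ^ 2 + rho ^ 2 + 2 * c * rho * cos t.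
Proof.
  intros h1 h2. rewrite Cmod2_alt. unfold Re, Im. rewrite h1, h2.
  pose proof (sin2_cos2 t) as E. unfold Rsqr in E. nra.
Qed.

Lemma Cmod_sq_pos (z : C) : z <> 0 -> 0 < Cmod z ^ 2.
Proof. intro h. apply pow_lt, Cmod_gt_0, h. Qed.

Lemma ln_Cmod (z : C) : z <> 0 -> ln (Cmod z) = ln (Cmod z ^ 2) / 2.
Proof. intro h. rewrite ln_pow by (apply Cmod_gt_0, h). simpl. field. Qed.

Lemma nonsingular_factors (z : C) :
  nonsingular z -> z <> 0 /\ (1 - z)%C <> 0 /\ (1 + z)%C <> 0.
Proof.
  destruct z as [x y]. intros [h0 [h1 h2]].
  split; [exact h0 | split]; intro E; injection E; intros Ey Ex.
  - apply h1. unfold RtoC. f_equal; lra.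
  - apply h2. unfold RtoC. f_equal; lra.
Qed.

Lemma re_g0_ln_sq (z : C) (r : R) : nonsingular z ->
  re_g0 z 0 r =
    (1 / (2 * sqrt 2) - 1 / 2 + r) / 2 * ln (Cmod z ^ 2)
    + (1 / 2 - 1 / (2 * sqrt 2)) / 2 * ln (Cmod (1 - z) ^ 2)
    + (1 / 2 + 1 / (2 * sqrt 2)) / 2 * ln (Cmod (1 + z) ^ 2)
    + r * ln (sqrt 2 + 1) - ln 2 / 2.
Proof.
  intro hz. destruct (nonsingular_factors z hz) as [h0 [h1 h2]].
  unfold re_g0. rewrite (ln_Cmod z), (ln_Cmod (1 - z)), (ln_Cmod (1 + z)) by assumption.
  pose proof sqrt2_pos. field. lra.
Qed.

Lemma circle0_moduli (rho t : R) :
  Cmod (RtoC rho * cis t) ^ 2 = rho ^ 2 /\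
  Cmod (1 - RtoC rho * cis t) ^ 2 = 1 + rho ^ 2 + (-2 * rho) * cos t /\
  Cmod (1 + RtoC rho * cis t) ^ 2 = 1 + rho ^ 2 + (2 * rho) * cos t.
Proof.
  repeat split.
  - rewrite (Cmod_sq_cis _ 0 rho t); [ring | simpl; ring | simpl; ring].
  - rewrite (Cmod_sq_cis _ 1 (- rho) t); [ring | simpl; ring | simpl; ring].
  - rewrite (Cmod_sq_cis _ 1 rho t); [ring | simpl; ring | simpl; ring].
Qed.

Lemma re_g0_circle0 (rho r t : R) : nonsingular (RtoC rho * cis t) ->
  re_g0 (RtoC rho * cis t) 0 r =
    ((1 / (2 * sqrt 2) - 1 / 2 + r) / 2 * ln (rho ^ 2) + r * ln (sqrt 2 + 1) - ln 2 / 2)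
    + ln_affine2 ((1 / 2 - 1 / (2 * sqrt 2)) / 2) (1 + rho ^ 2) (-2 * rho)
                 ((1 / 2 + 1 / (2 * sqrt 2)) / 2) (1 + rho ^ 2) (2 * rho) (cos t).
Proof.
  intro hz. destruct (circle0_moduli rho t) as [E0 [E1 E2]].
  rewrite re_g0_ln_sq, E0, E1, E2 by exact hz. unfold ln_affine2. ring.
Qed.

Lemma circle0_num (rho c : R) : 0 < rho ->
  ln_affine2_num ((1 / 2 - 1 / (2 * sqrt 2)) / 2) (1 + rho ^ 2) (-2 * rho)
                 ((1 / 2 + 1 / (2 * sqrt 2)) / 2) (1 + rho ^ 2) (2 * rho) c
  = 2 * rho ^ 2 * ((1 + rho ^ 2) / (2 * sqrt 2 * rho) - c).
Proof. intro hrho. pose proof sqrt2_pos. unfold ln_affine2_num. field. lra. Qed.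

Lemma re_g0_circle0_monotonicity (r rho a b : R) : 0 < rho ->
  (forall t, a <= t <= b -> nonsingular (RtoC rho * cis t)) ->
  cos_monotonicity (fun t => re_g0 (RtoC rho * cis t) 0 r)
    (fun t => cos t < (1 + rho ^ 2) / (2 * sqrt 2 * rho))
    (fun t => ~ cos t < (1 + rho ^ 2) / (2 * sqrt 2 * rho)) a b.
Proof.
  intros hrho hz.
  assert (dom : forall t, a <= t <= b ->
    0 < 1 + rho ^ 2 + (-2 * rho) * cos t /\ 0 < 1 + rho ^ 2 + (2 * rho) * cos t).
  { intros t ht. destruct (circle0_moduli rho t) as [_ [E1 E2]].
    destruct (nonsingular_factors _ (hz t ht)) as [_ [h1 h2]].
    rewrite <- E1, <- E2. split; apply Cmod_sq_pos; assumption. }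
  assert (hrho2 : 0 < rho ^ 2) by (apply pow_lt; lra).
  eapply cos_monotonicity_ln_affine2.
  - intros t ht. apply re_g0_circle0, hz, ht.
  - intros t ht. apply dom, ht.
  - intros t ht. apply dom, ht.
  - intros x y _ hy hP c hc. rewrite circle0_num by exact hrho.
    specialize (hP y hy). nra.
  - intros x y hx _ hQ c hc. rewrite circle0_num by exact hrho.
    specialize (hQ x hx). nra.
Qed.

Lemma circle1_moduli (rad phi : R) :
  Cmod (1 - RtoC rad * cis (- phi)) ^ 2 = 1 + rad ^ 2 + (-2 * rad) * cos phi /\
  Cmod (1 - (1 - RtoC rad * cis (- phi))) ^ 2 = rad ^ 2 /\
  Cmod (1 + (1 - RtoC rad * cis (- phi))) ^ 2 = 4 + rad ^ 2 + (-4 * rad) * cos phi.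
Proof.
  rewrite <- (cos_neg phi). repeat split.
  - rewrite (Cmod_sq_cis _ 1 (- rad) (- phi)); [ring | simpl; ring | simpl; ring].
  - rewrite (Cmod_sq_cis _ 0 rad (- phi)); [ring | simpl; ring | simpl; ring].
  - rewrite (Cmod_sq_cis _ 2 (- rad) (- phi)); [ring | simpl; ring | simpl; ring].
Qed.

Lemma re_g0_circle1 (rad r phi : R) : nonsingular (1 - RtoC rad * cis (- phi)) ->
  - re_g0 (1 - RtoC rad * cis (- phi)) 0 r =
    - ((1 / 2 - 1 / (2 * sqrt 2)) / 2 * ln (rad ^ 2) + r * ln (sqrt 2 + 1) - ln 2 / 2)
    + ln_affine2 (- (1 / (2 * sqrt 2) - 1 / 2 + r) / 2) (1 + rad ^ 2) (-2 * rad)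
                 (- (1 / 2 + 1 / (2 * sqrt 2)) / 2) (4 + rad ^ 2) (-4 * rad) (cos phi).
Proof.
  intro hz. destruct (circle1_moduli rad phi) as [E0 [E1 E2]].
  rewrite re_g0_ln_sq, E0, E1, E2 by exact hz. unfold ln_affine2. pose proof sqrt2_pos. field. lra.
Qed.

Definition Qaff (rad r c : R) : R :=
  (6 * sqrt 2 - 4 + (3 * sqrt 2 + 2) * rad ^ 2 + 16 * r + 4 * rad ^ 2 * r)
  + (- 8 * sqrt 2 * rad * (1 + sqrt 2 * r)) * c.

Lemma Qfun_Qaff (rad r phi : R) : Qfun rad r phi = Qaff rad r (cos phi).
Proof. unfold Qfun, Qaff. ring. Qed.

Lemma circle1_num (rad r c : R) :
  ln_affine2_num (- (1 / (2 * sqrt 2) - 1 / 2 + r) / 2) (1 + rad ^ 2) (-2 * rad)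
                 (- (1 / 2 + 1 / (2 * sqrt 2)) / 2) (4 + rad ^ 2) (-4 * rad) c
  = rad / 4 * Qaff rad r c.
Proof.
  unfold ln_affine2_num, Qaff. rewrite half_inv_sqrt2.
  ring_simplify. rewrite sqrt2_sq. field.
Qed.

Lemma re_g0_circle1_monotonicity (r rad a b : R) : 0 < rad ->
  (forall phi, a <= phi <= b -> nonsingular (1 - RtoC rad * cis (- phi))) ->
  cos_monotonicity (fun phi => - re_g0 (1 - RtoC rad * cis (- phi)) 0 r)
    (fun phi => 0 < Qfun rad r phi) (fun phi => Qfun rad r phi < 0) a b.
Proof.
  intros hR hz.
  assert (dom : forall phi, a <= phi <= b ->
    0 < 1 + rad ^ 2 + (-2 * rad) * cos phi /\ 0 < 4 + rad ^ 2 + (-4 * rad) * cos phi).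
  { intros phi hphi. destruct (circle1_moduli rad phi) as [E0 [_ E2]].
    destruct (nonsingular_factors _ (hz phi hphi)) as [h0 [_ h2]].
    rewrite <- E0, <- E2. split; apply Cmod_sq_pos; assumption. }
  eapply cos_monotonicity_ln_affine2.
  - intros phi hphi. apply re_g0_circle1, hz, hphi.
  - intros phi hphi. apply dom, hphi.
  - intros phi hphi. apply dom, hphi.
  - intros x y hx hy hP c hc. rewrite circle1_num.
    pose proof (hP x hx) as Px. pose proof (hP y hy) as Py. cbv beta in Px, Py.
    rewrite Qfun_Qaff in Px, Py.
    assert (0 < Qaff rad r c) by (apply (affine_pos_between _ _ (cos x) (cos y)); [lra | exact Px | exact Py]).
    nra.
  - intros x y hx hy hQ c hc. rewrite circle1_num.
    pose proof (hQ x hx) as Qx. pose proof (hQ y hy) as Qy. cbv beta in Qx, Qy.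
    rewrite Qfun_Qaff in Qx, Qy.
    assert (Qaff rad r c < 0) by (apply (affine_neg_between _ _ (cos x) (cos y)); [lra | exact Qx | exact Qy]).
    nra.
Qed.

Theorem lemma8p1 (r : R) :
  (forall rho : R, 0 < rho ->
   let f := fun t : R => re_g0 (Cmult (RtoC rho) (cis t)) 0 r in
   let cond := fun t : R => cos t < (1 + rho ^ 2) / (2 * sqrt 2 * rho) in
   forall a b : R, a < b ->
   (forall t, a <= t <= b -> nonsingular (Cmult (RtoC rho) (cis t))) ->
   ((0 <= a /\ b <= PI) ->
      ((forall t, a <= t <= b -> cond t) -> decreasing_on f a b) /\
      ((forall t, a <= t <= b -> ~ cond t) -> increasing_on f a b)) /\
   ((PI <= a /\ b <= 2 * PI) ->
      ((forall t, a <= t <= b -> cond t) -> increasing_on f a b) /\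
      ((forall t, a <= t <= b -> ~ cond t) -> decreasing_on f a b)))
  /\
  (forall R0 : R, 0 < R0 ->
   let z := fun phi : R => Cminus (RtoC 1) (Cmult (RtoC R0) (cis (- phi))) in
   let f := fun phi : R => - re_g0 (z phi) 0 r in
   forall a b : R, a < b ->
   (forall phi, a <= phi <= b -> nonsingular (z phi)) ->
   ((0 <= a /\ b <= PI) ->
      ((forall phi, a <= phi <= b -> 0 < Qfun R0 r phi) -> decreasing_on f a b) /\
      ((forall phi, a <= phi <= b -> Qfun R0 r phi < 0) -> increasing_on f a b)) /\
   ((PI <= a /\ b <= 2 * PI) ->
      ((forall phi, a <= phi <= b -> 0 < Qfun R0 r phi) -> increasing_on f a b) /\
      ((forall phi, a <= phi <= b -> Qfun R0 r phi < 0) -> decreasing_on f a b))).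
Proof.
  split.
  - intros rho hrho f cond a b _ hz.
    exact (re_g0_circle0_monotonicity r rho a b hrho hz).
  - intros R0 hR z f a b _ hz.
    exact (re_g0_circle1_monotonicity r R0 a b hR hz).
Qed.
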